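(* Let a $d$-dimensional Hegselmann–Krause system with $n$ agents, confidence bound $\varepsilon>0$, arbitrary initial positions, and social network the complete graph $K_n$ evolve under uniform random asynchronous updates, and let $\delta>0$. Then the expected convergence time to a $\delta$-stable state is at most $\operatorname{O}\big(n^3(n^2+(\varepsilon/\delta)^2)\big)$.
   Context: A $d$-dimensional Hegselmann–Krause system (HKS) consists of a finite undirected graph $G=(V,E)$ (the social network) whose $n=|V|$ nodes are agents, a confidence bound $\varepsilon>0$, and initial positions $x_v(0)\in\mathbb{R}^d$. In a state (positions $x_v$), the influencing neighborhood of $v$ is $N_v=\{u:\{u,v\}\in E,\ \|x_u-x_v\|_2\le\varepsilon\}\cup\{v\}$; the influence network is $(V,E_I)$ with $E_I=\{\{u,v\}\in E:\|x_u-x_v\|_2\le\varepsilon\}$; the length of an edge $\{u,v\}$ is $\|x_u-x_v\|_2$. Uniform random asynchronous updates: at each step $t$ one agent $v$ is chosen uniformly at random (independently) and set to $x_v(t+1)=\frac{1}{|N_v(t)|}\sum_{u\in N_v(t)}x_u(t)$, all others unchanged. A state is $\delta$-stable if every edge of the influence network has length at most $\delta$; the convergence time is the number of steps until a $\delta$-stable state is first reached. Constants in the $\operatorname{O}$-notation are absolute. *)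

From HB Require Import structures.
From mathcomp Require Import all_boot all_order all_algebra.
From mathcomp Require Import all_classical all_reals all_analysis.
Set Implicit Arguments. Unset Strict Implicit. Unset Printing Implicit Defensive.
Import Order.TTheory GRing.Theory Num.Theory.
Local Open Scope ring_scope.

Section HK.
Variables (R : realType) (d n : nat).

Definition point := 'rV[R]_d.
Definition state := 'I_n -> point.

Definition dist2 (p q : point) : R :=
  Num.sqrt (\sum_(i < d) (p ord0 i - q ord0 i) ^+ 2).

Definition complete_graph : rel 'I_n := fun u v => u != v.

Variables (G : rel 'I_n) (eps : R).

Definition nbhd (x : state) (v : 'I_n) : {set 'I_n} :=
  [set u | (u == v) || (G u v && (dist2 (x u) (x v) <= eps))].

Definition hk_update (x : state) (v : 'I_n) : state :=
  fun u => if u == v then (#|nbhd x v|%:R)^-1 *: \sum_(w in nbhd x v) x w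
           else x u.

Definition run (x0 : state) (s : seq 'I_n) : state := foldl hk_update x0 s.

Definition stable (delta : R) (x : state) : bool :=
  [forall u, forall v, (G u v && (dist2 (x u) (x v) <= eps)) ==>
                         (dist2 (x u) (x v) <= delta)].

(* Under uniform random asynchronous updates the first t chosen agents form a
   uniformly random element of 'I_n^t. The convergence time T exceeds t iff
   none of the states at times 0..t is delta-stable. *)
Definition tail_prob (delta : R) (x0 : state) (t : nat) : R :=
  #|[set s : t.-tuple 'I_n |
       [forall k : 'I_t.+1, ~~ stable delta (run x0 (take k s))]]|%:R
  / (n ^ t)%:R.

(* Expected convergence time E[T] = sum_{t >= 0} P(T > t)  (in \bar R,
   possibly +oo). *)
Definition expected_conv_time (delta : R) (x0 : state) : \bar R :=
  (\sum_(0 <= t <oo) (tail_prob delta x0 t)%:E)%E.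

End HK.

From Pilot Require Import Defs.
From HB Require Import structures.
From mathcomp Require Import all_boot all_order all_algebra.
From mathcomp Require Import all_classical all_reals all_analysis.
From mathcomp Require Import ring lra.
Set Implicit Arguments. Unset Strict Implicit. Unset Printing Implicit Defensive.
Import Order.TTheory GRing.Theory Num.Theory.
Local Open Scope ring_scope.

(* The potential Phi(x) = sum_{u,v} min(|x_u - x_v|^2, eps^2) lies in
   [0, n^2 eps^2].  Moving agent w to the centroid y_w of its neighbourhood
   N_w lowers Phi by at least 2 |N_w| |x_w - y_w|^2 (parallel axis theorem;
   pairs beyond eps are capped anyway), so a uniformly random update lowers
   Phi by (2/n) D(x) on average, where D(x) = sum_w |N_w| |x_w - y_w|^2.
   If x is not delta-stable then D(x) >= D_min := (4/delta^2 + 16 n^2/eps^2)^-1: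
   when every neighbourhood is an eps-clique, the ends u, v of a long
   influence edge share their neighbourhood and centroid, so
   delta^2 < |x_u - x_v|^2 <= 4 D(x); otherwise some N_m contains a, b more
   than eps apart, and cutting the projections onto x_a - x_b at their
   midpoint gives eps^2 <= 16 n^2 D(x) by Cauchy-Schwarz.  Hence
   E[Phi_(t+1)] <= E[Phi_t] - (2/n) D_min P(T > t), and telescoping gives
   E[T] = sum_t P(T > t) <= n Phi(x_0) / (2 D_min) <= 8 n^3 (n^2 + (eps/delta)^2). *)

Lemma sqrtr_le (R : rcfType) (x e : R) : 0 <= e -> (Num.sqrt x <= e) = (x <= e ^+ 2).
Proof. by move=> e_ge0; rewrite -{1}(ger0_norm e_ge0) -sqrtr_sqr ler_sqrt ?sqr_ge0. Qed.

Lemma ler_sum_term (R : numDomainType) (I : finType) (P : pred I) (F : I -> R) i0 :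
  P i0 -> (forall i, P i -> 0 <= F i) -> F i0 <= \sum_(i | P i) F i.
Proof.
move=> Pi0 F_ge0; rewrite (bigD1 i0) //= lerDl.
by apply: sumr_ge0 => i /andP[Pi _]; exact: F_ge0.
Qed.

Lemma cauchy_schwarz_sum (R : realFieldType) (I : finType) (F H : I -> R) :
  (\sum_i F i * H i) ^+ 2 <= (\sum_i F i ^+ 2) * (\sum_i H i ^+ 2).
Proof.
have : 0 <= \sum_i \sum_j (F i * H j - F j * H i) ^+ 2.
  by apply: sumr_ge0 => i _; apply: sumr_ge0 => j _; exact: sqr_ge0.
have -> : \sum_i \sum_j (F i * H j - F j * H i) ^+ 2 =
    \sum_i \sum_j F i ^+ 2 * H j ^+ 2 + \sum_i \sum_j F j ^+ 2 * H i ^+ 2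
    - 2 * \sum_i \sum_j (F i * H i) * (F j * H j).
  rewrite mulr_sumr -big_split -sumrB /=.
  apply: eq_bigr => i _; rewrite mulr_sumr -big_split -sumrB /=.
  by apply: eq_bigr => j _; ring.
rewrite [X in _ + X - _]exchange_big /=.
rewrite -!big_distrlr /= -expr2; lra.
Qed.

Lemma telescope_sum_le (R : realDomainType) (a p : nat -> R) (c : R) :
  (forall k, a k.+1 <= a k - c * p k) -> (forall k, 0 <= a k) ->
  forall K, c * \sum_(k < K) p k <= a 0%N.
Proof.
move=> step a_ge0 K; suff : c * \sum_(k < K) p k <= a 0%N - a K by have := a_ge0 K; lra.
elim: K => [|K IH]; first by rewrite big_ord0 mulr0 subrr.
by rewrite big_ord_recr mulrDr; have := step K; lra.
Qed.

Lemma big_rcons_tuple (R : Type) (idx : R) (op : Monoid.com_law idx)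
    (T : finType) (t : nat) (F : t.+1.-tuple T -> R) :
  \big[op/idx]_(s : t.+1.-tuple T) F s =
  \big[op/idx]_(s : t.-tuple T) \big[op/idx]_(v : T) F (rcons_tuple s v).
Proof.
rewrite pair_big /=.
pose h (sv : t.-tuple T * T) := rcons_tuple sv.1 sv.2.
pose h' (s : t.+1.-tuple T) :=
  (belast_tuple (thead s) (behead_tuple s), last (thead s) (behead s)).
have lastE (s : t.+1.-tuple T) :
    tval s = rcons (belast (thead s) (behead s)) (last (thead s) (behead s)).
  by rewrite -lastI {1}(tuple_eta s).
have hK : cancel h h'.
  move=> [s v]; have /rcons_inj[s_eq v_eq] := lastE (h (s, v)).
  by congr (_, _); [apply: val_inj; rewrite /= -s_eq | rewrite /h' -v_eq].
have h'K : cancel h' h by move=> s; apply: val_inj; rewrite /= [RHS]lastE.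
by rewrite (reindex h) //; exists h' => sv _; [exact: hK | exact: h'K].
Qed.

Lemma sum_rel_swap (V : nmodType) (I : finType) (e : rel I) (G : I -> I -> V) :
  symmetric e -> \sum_w \sum_(z | e w z) G w z = \sum_w \sum_(z | e w z) G z w.
Proof.
move=> e_sym; rewrite (exchange_big_dep predT) //=.
by apply: eq_bigr => w _; apply: eq_bigl => z; rewrite e_sym.
Qed.

(* Summing by parts over the symmetric relation, twice the right-hand side is
   sum_{e w z} (g w - g z) (p w - p z) >= 0 with g the indicator of the level
   set; one of the edges m-a, m-b crosses the midpoint level with a drop of
   at least (p a - p b) / 2. *)
Lemma level_set_laplacian_ge (R : realFieldType) (I : finType) (e : rel I)
    (p : I -> R) (a m b : I) :
  symmetric e -> e m a -> e m b -> p b < p a ->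
  (p a - p b) / 4 <=
    \sum_w ((p a + p b) / 2 < p w)%R%:R * \sum_(z | e w z) (p w - p z).
Proof.
move=> e_sym ema emb pba; set t := (p a + p b) / 2.
pose g w : R := (t < p w)%R%:R.
pose cut w z := (g w - g z) * (p w - p z).
have cut_ge0 w z : 0 <= cut w z.
  rewrite /cut /g; case: (ltrP t (p w)) => hw; case: (ltrP t (p z)) => hz /=;
    rewrite ?subrr ?mul0r ?subr0 ?mul1r ?sub0r //; lra.
have sum_cutE : \sum_w \sum_(z | e w z) cut w z =
    2 * \sum_w g w * \sum_(z | e w z) (p w - p z).
  transitivity (\sum_w \sum_(z | e w z) (g w * (p w - p z) + g z * (p z - p w))).
    by apply: eq_bigr => w _; apply: eq_bigr => z _; rewrite /cut; ring.
  under eq_bigr do rewrite big_split /=.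
  rewrite big_split /= -(sum_rel_swap (fun w z => g w * (p w - p z))) //.
  by under [in RHS]eq_bigr do rewrite mulr_sumr; ring.
suff : (p a - p b) / 2 <= \sum_w \sum_(z | e w z) cut w z by rewrite sum_cutE; lra.
have cut_le_sum w z : e w z -> cut w z <= \sum_w \sum_(z | e w z) cut w z.
  move=> ewz; have inner_ge0 w' : 0 <= \sum_(z | e w' z) cut w' z.
    by apply: sumr_ge0 => ? _; exact: cut_ge0.
  apply: le_trans
    (ler_sum_term (P := predT) (i0 := w) _ (fun w' _ => inner_ge0 w')) => //.
  by apply: ler_sum_term => // ? _; exact: cut_ge0.
have [ta tb] : t < p a /\ p b < t by rewrite /t; split; lra.
have [tm | mt] := ltrP t (p m).
- apply: le_trans (cut_le_sum _ _ emb).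
  rewrite /cut /g tm (ltNge t (p b)) (ltW tb) /= subr0 mul1r; rewrite /t in tm; lra.
- apply: le_trans (cut_le_sum a m _); last by rewrite e_sym.
  rewrite /cut /g ta (ltNge t (p m)) mt /= subr0 mul1r; rewrite /t in mt; lra.
Qed.

Section Geometry.
Variables (R : realType) (d : nat).
Implicit Types (p q c y : Defs.point R d).

Definition sqdist p q : R := \sum_(i < d) (p ord0 i - q ord0 i) ^+ 2.

Lemma sqdist_ge0 p q : 0 <= sqdist p q.
Proof. by apply: sumr_ge0 => i _; exact: sqr_ge0. Qed.

Lemma sqdistC p q : sqdist p q = sqdist q p.
Proof. by apply: eq_bigr => i _; rewrite -sqrrN opprB. Qed.

Lemma sqdistxx p : sqdist p p = 0.
Proof. by rewrite /sqdist big1 // => i _; rewrite subrr expr0n. Qed.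

Lemma dist2_le p q e : 0 <= e -> (dist2 p q <= e) = (sqdist p q <= e ^+ 2).
Proof. exact: sqrtr_le. Qed.

Lemma sqdist_le_mid p q y : sqdist p q <= 2 * sqdist p y + 2 * sqdist q y.
Proof.
rewrite /sqdist !mulr_sumr -big_split /=; apply: ler_sum => i _.
by have := sqr_ge0 (p ord0 i + q ord0 i - 2 * y ord0 i); nra.
Qed.

Definition centroid (I : finType) (A : {set I}) (x : I -> Defs.point R d) :
    Defs.point R d :=
  (#|A|%:R)^-1 *: \sum_(z in A) x z.

Variables (I : finType) (A : {set I}) (x : I -> Defs.point R d).
Hypothesis A_gt0 : (0 < #|A|)%N.

Lemma centroid_coordE i : #|A|%:R * centroid A x ord0 i = \sum_(z in A) x z ord0 i.
Proof. by rewrite mxE summxE mulrA mulfV ?mul1r // pnatr_eq0 -lt0n. Qed.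

Lemma sum_sub_centroid c i :
  \sum_(z in A) (c ord0 i - x z ord0 i) = #|A|%:R * (c ord0 i - centroid A x ord0 i).
Proof. by rewrite sumrB sumr_const mulrBr centroid_coordE mulr_natl. Qed.

(* Parallel axis theorem: moving the reference point from the centroid to [c]
   raises the total squared distance by [#|A| * sqdist c (centroid A x)]. *)
Lemma sum_sqdist_centroid c :
  \sum_(z in A) (sqdist (x z) (centroid A x) - sqdist (x z) c) =
  - (#|A|%:R * sqdist c (centroid A x)).
Proof.
rewrite /sqdist (eq_bigr (fun z => \sum_(i < d) ((x z ord0 i - centroid A x ord0 i) ^+ 2
   - (x z ord0 i - c ord0 i) ^+ 2))); last by move=> z _; rewrite sumrB.
rewrite exchange_big /= mulr_sumr -sumrN; apply: eq_bigr => i _.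
set y : R := centroid A x ord0 i.
transitivity (\sum_(z in A) (c ord0 i - y) * ((2 * x z ord0 i - y) - c ord0 i)).
  by apply: eq_bigr => z _; ring.
rewrite -mulr_sumr !sumrB -mulr_sumr -centroid_coordE !sumr_const -/y.
by rewrite -[y *+ _]mulr_natl -[c ord0 i *+ _]mulr_natl; ring.
Qed.

End Geometry.

Section HegselmannKrause.
Variables (R : realType) (d n : nat) (eps : R).
Hypothesis eps_gt0 : 0 < eps.
Implicit Types (x : Defs.state R d n) (u v w : 'I_n).

Local Notation G := (@complete_graph n).
Local Notation N x v := (nbhd G eps x v).
Local Notation mean x v := (centroid (N x v) x).

Lemma in_nbhd x v u :
  (u \in N x v) = (u == v) || ((u != v) && (sqdist (x u) (x v) <= eps ^+ 2)).
Proof. by rewrite inE dist2_le // ltW. Qed.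

Lemma nbhd_sym x v u : (u \in N x v) = (v \in N x u).
Proof. by rewrite !in_nbhd eq_sym sqdistC. Qed.

Lemma nbhd_self x v : v \in N x v.
Proof. by rewrite in_nbhd eqxx. Qed.

Lemma card_nbhd_gt0 x v : (0 < #|N x v|)%N.
Proof. by apply/card_gt0P; exists v; exact: nbhd_self. Qed.

Lemma card_nbhd_le x v : (#|N x v| <= n)%N.
Proof. by rewrite -[X in (_ <= X)%N]card_ord max_card. Qed.

Lemma nbhd_sqdist_le x v u : u \in N x v -> sqdist (x u) (x v) <= eps ^+ 2.
Proof.
rewrite in_nbhd => /orP[/eqP-> | /andP[_ //]].
by rewrite sqdistxx sqr_ge0.
Qed.

Lemma nbhd_sqdist_gt x v u : u \notin N x v -> eps ^+ 2 < sqdist (x u) (x v).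
Proof. by rewrite in_nbhd negb_or => /andP[/negbTE-> /=]; rewrite -ltNge. Qed.

Lemma hk_updateE x w u :
  hk_update G eps x w u = if u == w then mean x w else x u.
Proof. by []. Qed.

Definition trunc_sqdist (p q : Defs.point R d) := Num.min (sqdist p q) (eps ^+ 2).

Definition potential x := \sum_u \sum_v trunc_sqdist (x u) (x v).

Lemma trunc_sqdistC p q : trunc_sqdist p q = trunc_sqdist q p.
Proof. by rewrite /trunc_sqdist sqdistC. Qed.

Lemma trunc_sqdist_ge0 p q : 0 <= trunc_sqdist p q.
Proof. by rewrite le_min sqdist_ge0 sqr_ge0. Qed.

Lemma potential_ge0 x : 0 <= potential x.
Proof.
by apply: sumr_ge0 => u _; apply: sumr_ge0 => v _; exact: trunc_sqdist_ge0.
Qed.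

Lemma potential_le x : potential x <= n%:R ^+ 2 * eps ^+ 2.
Proof.
apply: le_trans (_ : \sum_(u < n) \sum_(v < n) eps ^+ 2 <= _).
  by do 2![apply: ler_sum => ? _]; rewrite ge_min lexx orbT.
by rewrite !sumr_const card_ord -mulrnA -[_ *+ (n * n)]mulr_natr natrM -expr2 mulrC.
Qed.

Definition mean_gain x w v : R :=
  if v \in N x w then sqdist (x v) (mean x w) - sqdist (x v) (x w) else 0.

Lemma sum_mean_gain x w :
  \sum_v mean_gain x w v = - (#|N x w|%:R * sqdist (x w) (mean x w)).
Proof. by rewrite -big_mkcond sum_sqdist_centroid ?card_nbhd_gt0. Qed.

Lemma trunc_sqdist_mean_le x w v :
  trunc_sqdist (mean x w) (x v) <= trunc_sqdist (x w) (x v) + mean_gain x w v.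
Proof.
rewrite /mean_gain /trunc_sqdist; case: ifP => [vN | /negbT vN].
  have near : sqdist (x w) (x v) <= eps ^+ 2 by rewrite sqdistC nbhd_sqdist_le.
  by rewrite (min_l near) ge_min !(sqdistC (x v)); apply/orP; left; lra.
have far : eps ^+ 2 < sqdist (x w) (x v) by rewrite sqdistC nbhd_sqdist_gt.
by rewrite (min_r (ltW far)) addr0 ge_min lexx orbT.
Qed.

Lemma potential_update_le x w :
  potential (hk_update G eps x w) <=
  potential x - 2 * (#|N x w|%:R * sqdist (x w) (mean x w)).
Proof.
set x' := hk_update G eps x w; set h := mean_gain x w.
have pair_le u v : trunc_sqdist (x' u) (x' v) <= trunc_sqdist (x u) (x v) +
    ((if u == w then h v else 0) + (if v == w then h u else 0)).
  rewrite /x' !hk_updateE.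
  case: (eqVneq u w) => [->|uw]; case: (eqVneq v w) => [->|vw] /=.
  - rewrite /trunc_sqdist !sqdistxx /h /mean_gain nbhd_self sqdistxx subr0.
    by have := sqdist_ge0 (x w) (mean x w); rewrite sqdistC; lra.
  - by rewrite addr0; exact: trunc_sqdist_mean_le.
  - by rewrite add0r !(trunc_sqdistC (x u)); exact: trunc_sqdist_mean_le.
  - by rewrite !addr0.
apply: le_trans (_ : \sum_u \sum_v (trunc_sqdist (x u) (x v) +
    ((if u == w then h v else 0) + (if v == w then h u else 0))) <= _).
  by apply: ler_sum => u _; apply: ler_sum => v _; exact: pair_le.
have sum_row : \sum_u \sum_v (if u == w then h v else 0) = \sum_v h v.
  by rewrite exchange_big; apply: eq_bigr => v _; rewrite -big_mkcond big_pred1_eq.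
have sum_col : \sum_u \sum_v (if v == w then h u else 0) = \sum_u h u.
  by apply: eq_bigr => u _; rewrite -big_mkcond big_pred1_eq.
under eq_bigr do rewrite !big_split /=.
by rewrite !big_split /= sum_row sum_col sum_mean_gain -/(potential x); lra.
Qed.

Definition disagreement x := \sum_w #|N x w|%:R * sqdist (x w) (mean x w).

Lemma sum_potential_update_le x :
  \sum_v potential (hk_update G eps x v) <= n%:R * potential x - 2 * disagreement x.
Proof.
apply: le_trans (ler_sum _ (fun v _ => potential_update_le x v)) _.
by rewrite sumrB sumr_const card_ord mulr_natl /disagreement mulr_sumr.
Qed.

Lemma disagreement_ge0 x : 0 <= disagreement x.
Proof. by apply: sumr_ge0 => w _; rewrite mulr_ge0 ?ler0n ?sqdist_ge0. Qed.

Lemma sqdist_mean_le_disagreement x u : sqdist (x u) (mean x u) <= disagreement x.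
Proof.
have term_ge0 w : 0 <= #|N x w|%:R * sqdist (x w) (mean x w).
  by rewrite mulr_ge0 ?ler0n ?sqdist_ge0.
apply: le_trans (ler_sum_term (P := predT) (i0 := u) _ (fun w _ => term_ge0 w)) => //.
have card_ge1 : 1 <= #|N x u|%:R :> R by rewrite ler1n card_nbhd_gt0.
by have := sqdist_ge0 (x u) (mean x u); nra.
Qed.

Definition nbhds_are_cliques x :=
  forall a m b, a \in N x m -> b \in N x m -> sqdist (x a) (x b) <= eps ^+ 2.

Lemma clique_nbhd_eq x u v : nbhds_are_cliques x -> u \in N x v -> N x u = N x v.
Proof.
move=> cliques uv.
have incl u' v' z : u' \in N x v' -> z \in N x u' -> z \in N x v'.
  move=> u'v' zu'; rewrite in_nbhd; case: eqVneq => //= _.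
  by apply: cliques zu' _; rewrite nbhd_sym.
by apply/setP => z; apply/idP/idP; apply: incl; rewrite // nbhd_sym.
Qed.

Lemma clique_sqdist_le x u v : nbhds_are_cliques x -> u \in N x v ->
  sqdist (x u) (x v) <= 4 * disagreement x.
Proof.
move=> cliques uv.
have mean_eq : mean x u = mean x v by rewrite /centroid (clique_nbhd_eq cliques uv).
have := sqdist_le_mid (x u) (x v) (mean x v).
have := sqdist_mean_le_disagreement x u; have := sqdist_mean_le_disagreement x v.
rewrite mean_eq; lra.
Qed.

Lemma projected_laplacian_sqr_le x w (f : 'I_d -> R) :
  (\sum_(z in N x w) (\sum_i x w ord0 i * f i - \sum_i x z ord0 i * f i)) ^+ 2 <=
  (\sum_i f i ^+ 2) * (n%:R * (#|N x w|%:R * sqdist (x w) (mean x w))).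
Proof.
have -> : \sum_(z in N x w) (\sum_i x w ord0 i * f i - \sum_i x z ord0 i * f i) =
    \sum_i f i * (#|N x w|%:R * (x w ord0 i - mean x w ord0 i)).
  under eq_bigr do rewrite -sumrB; rewrite exchange_big /=.
  apply: eq_bigr => i _; rewrite -sum_sub_centroid ?card_nbhd_gt0 // mulr_sumr.
  by apply: eq_bigr => z _; ring.
apply: le_trans (cauchy_schwarz_sum _ _) _; apply: ler_wpM2l.
  by apply: sumr_ge0 => i _; exact: sqr_ge0.
under eq_bigr do rewrite exprMn; rewrite -mulr_sumr expr2 -mulrA.
apply: ler_wpM2r; first by rewrite mulr_ge0 ?ler0n ?sqdist_ge0.
by rewrite ler_nat card_nbhd_le.
Qed.

(* With F = |x a - x b|^2 and Q w = <x a - x b, #|N x w| (x w - mean x w)>,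
   the sum of Q over the upper level set is at least F / 4 and, by
   Cauchy-Schwarz twice, at most n sqrt (F D(x)). *)
Lemma nonclique_disagreement_ge x a m b :
  a \in N x m -> b \in N x m -> eps ^+ 2 < sqdist (x a) (x b) ->
  eps ^+ 2 <= 16 * n%:R ^+ 2 * disagreement x.
Proof.
move=> am bm far; set F := sqdist (x a) (x b) in far *.
pose f i := x a ord0 i - x b ord0 i.
pose p w := \sum_i x w ord0 i * f i.
pose Q w := \sum_(z in N x w) (p w - p z).
have F_gt0 : 0 < F by apply: le_lt_trans far; exact: sqr_ge0.
have pabE : p a - p b = F.
  by rewrite /p -sumrB; apply: eq_bigr => i _; rewrite /f; ring.
have cut : F / 4 <= \sum_w ((p a + p b) / 2 < p w)%R%:R * Q w.
  rewrite -pabE /Q; apply: (level_set_laplacian_ge (e := fun w z => z \in N x w) _ am bm).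
  - by move=> w z; rewrite /= nbhd_sym.
  - by rewrite -subr_gt0 pabE.
have indicator_sqr_le : \sum_w (((p a + p b) / 2 < p w)%R%:R : R) ^+ 2 <= n%:R.
  apply: le_trans (_ : \sum_(w < n) (1 : R) <= _); last by rewrite sumr_const card_ord.
  by apply: ler_sum => w _; case: (_ < _)%R; rewrite ?expr1n ?expr0n.
have Q_sqr_le : \sum_w Q w ^+ 2 <= F * (n%:R * disagreement x).
  rewrite /disagreement !mulr_sumr; apply: ler_sum => w _.
  exact: projected_laplacian_sqr_le.
have S_sqr_le := le_trans (cauchy_schwarz_sum _ _)
  (ler_pM (sumr_ge0 _ (fun w _ => sqr_ge0 _)) (sumr_ge0 _ (fun w _ => sqr_ge0 _))
     indicator_sqr_le Q_sqr_le).
move: S_sqr_le cut; set S := \sum_w _ * Q w => S_sqr_le cut.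
have F4_ge0 : 0 <= F / 4 by lra.
have := ler_pM F4_ge0 F4_ge0 cut cut; rewrite -[S * S]expr2 => cut_sqr.
suff : F <= 16 * n%:R ^+ 2 * disagreement x by lra.
have : F * F <= F * (16 * n%:R ^+ 2 * disagreement x) by lra.
by rewrite ler_pM2l.
Qed.

Variable delta : R.
Hypothesis delta_gt0 : 0 < delta.

Lemma unstable_edge x : ~~ stable G eps delta x ->
  exists u v, u \in N x v /\ delta ^+ 2 < sqdist (x u) (x v).
Proof.
move=> /forallPn[u /forallPn[v]]; rewrite negb_imply => /andP[near far].
exists u, v; split; first by rewrite inE near orbT.
by rewrite ltNge -dist2_le ?(ltW delta_gt0).
Qed.

Definition min_drift := (4 / delta ^+ 2 + 16 * n%:R ^+ 2 / eps ^+ 2)^-1.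

Lemma min_drift_gt0 : 0 < min_drift.
Proof.
rewrite invr_gt0 ltr_pwDl ?divr_gt0 ?exprn_gt0 //.
by rewrite divr_ge0 ?mulr_ge0 ?exprn_ge0 ?ler0n ?ltW.
Qed.

Lemma unstable_disagreement_ge x : ~~ stable G eps delta x -> min_drift <= disagreement x.
Proof.
move=> /unstable_edge[u [v [uv far]]].
have eps2_gt0 : 0 < eps ^+ 2 by rewrite exprn_gt0.
have delta2_gt0 : 0 < delta ^+ 2 by rewrite exprn_gt0.
have D_ge0 := disagreement_ge0 x.
rewrite /min_drift -div1r ler_pdivrMr; last by rewrite -invr_gt0 min_drift_gt0.
rewrite mulrDr.
have : 0 <= disagreement x * (4 / delta ^+ 2) by rewrite mulr_ge0 // divr_ge0 // ltW.
have : 0 <= disagreement x * (16 * n%:R ^+ 2 / eps ^+ 2).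
  by rewrite mulr_ge0 // divr_ge0 ?mulr_ge0 ?ler0n // ltW.
suff [] : 1 <= disagreement x * (4 / delta ^+ 2) \/
          1 <= disagreement x * (16 * n%:R ^+ 2 / eps ^+ 2) by lra.
rewrite !mulrA !ler_pdivlMr // !mul1r.
case: (pselect (exists a m b,
    [/\ a \in N x m, b \in N x m & eps ^+ 2 < sqdist (x a) (x b)])).
- move=> [a [m [b [am bm ab]]]]; right.
  by have := nonclique_disagreement_ge am bm ab; lra.
- move=> no_far; left; suff cliques : nbhds_are_cliques x.
    by have := clique_sqdist_le cliques uv; lra.
  move=> a m b am bm; rewrite leNgt; apply/negP => ab.
  by apply: no_far; exists a, m, b.
Qed.

Definition unstable_runs x0 t := [set s : t.-tuple 'I_n |
  [forall k : 'I_t.+1, ~~ stable G eps delta (run G eps x0 (take k s))]].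

Lemma tail_probE x0 t :
  tail_prob G eps delta x0 t = #|unstable_runs x0 t|%:R / (n ^ t)%:R.
Proof. by []. Qed.

Lemma tail_prob_ge0 x0 t : 0 <= tail_prob G eps delta x0 t.
Proof. by rewrite divr_ge0 ?ler0n. Qed.

(* [n ^ t] times the expected potential after [t] random updates. *)
Definition total_potential x0 t :=
  \sum_(s : t.-tuple 'I_n) potential (run G eps x0 s).

Lemma total_potential_step x0 t :
  total_potential x0 t.+1 <=
  n%:R * total_potential x0 t - 2 * min_drift * #|unstable_runs x0 t|%:R.
Proof.
have step s : \sum_v potential (run G eps x0 (rcons_tuple s v)) <=
    n%:R * potential (run G eps x0 s) -
    (if s \in unstable_runs x0 t then 2 * min_drift else 0).
  under eq_bigr do rewrite /run /= foldl_rcons.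
  apply: le_trans (sum_potential_update_le _) _.
  have := disagreement_ge0 (run G eps x0 s); case: ifP => [s_unstable | _]; last by lra.
  have : ~~ stable G eps delta (run G eps x0 s).
    move: s_unstable; rewrite inE => /forallP /(_ ord_max).
    by rewrite take_oversize ?size_tuple.
  by move/unstable_disagreement_ge; lra.
rewrite /total_potential big_rcons_tuple.
apply: le_trans (ler_sum _ (fun s _ => step s)) _.
by rewrite sumrB -mulr_sumr -big_mkcond sumr_const mulr_natr.
Qed.

Lemma tail_prob_void x0 t : n = 0%N -> tail_prob G eps delta x0 t = 0.
Proof.
move=> n0; rewrite tail_probE eq_card0 ?mul0r // => s; rewrite !inE.
apply/negbTE/forallPn; exists ord0; rewrite negbK.
by apply/forallP => u; have := ltn_ord u; rewrite {2}n0.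
Qed.

Lemma total_potential0 x0 : total_potential x0 0 = potential x0.
Proof.
rewrite /total_potential (big_pred1 [tuple]) // => s.
by apply/esym/eqP; exact: tuple0.
Qed.

Lemma sum_tail_prob_le x0 K :
  \sum_(k < K) tail_prob G eps delta x0 k <= n%:R / (2 * min_drift) * potential x0.
Proof.
have drift_gt0 := min_drift_gt0.
have [n0 | n_gt0] := posnP n.
  by rewrite big1 => [|k _]; [rewrite n0 !mul0r | exact: tail_prob_void].
have pow_neq0 k : (n ^ k)%:R != 0 :> R by rewrite pnatr_eq0 -lt0n expn_gt0 n_gt0.
have n_neq0 : n%:R != 0 :> R by rewrite pnatr_eq0 -lt0n.
have drift_neq0 : min_drift != 0 by rewrite gt_eqF.
pose c := 2 * min_drift / n%:R.
have c_gt0 : 0 < c by rewrite divr_gt0 ?mulr_gt0 ?ltr0n.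
have bound : c * \sum_(k < K) tail_prob G eps delta x0 k <= potential x0.
  have := @telescope_sum_le _ (fun k => total_potential x0 k / (n ^ k)%:R)
    (tail_prob G eps delta x0) c _ _ K.
  rewrite /= expn0 divr1 total_potential0; apply.
  - move=> k; rewrite tail_probE.
    apply: le_trans (ler_wpM2r _ (total_potential_step x0 k)) _.
      by rewrite invr_ge0 ler0n.
    by rewrite expnS natrM /c le_eqVlt; apply/orP; left; apply/eqP; field; apply/andP.
  - move=> k; rewrite divr_ge0 ?ler0n //.
    by apply: sumr_ge0 => s _; exact: potential_ge0.
rewrite -(ler_pM2l c_gt0); apply: le_trans bound _.
by rewrite /c le_eqVlt; apply/orP; left; apply/eqP; field; apply/andP.
Qed.

Lemma sum_tail_prob_le_poly x0 K :
  \sum_(k < K) tail_prob G eps delta x0 k <=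
  8%:R * n%:R ^+ 3 * (n%:R ^+ 2 + (eps / delta) ^+ 2).
Proof.
apply: le_trans (sum_tail_prob_le x0 K) _.
have coef_ge0 : 0 <= n%:R / (2 * min_drift).
  by rewrite divr_ge0 ?ler0n ?mulr_ge0 ?ltW ?min_drift_gt0.
apply: le_trans (ler_wpM2l coef_ge0 (potential_le x0)) _.
have delta_neq0 : delta != 0 by rewrite gt_eqF.
have eps_neq0 : eps != 0 by rewrite gt_eqF.
rewrite /min_drift invf_div.
have -> : n%:R * ((4 / delta ^+ 2 + 16 * n%:R ^+ 2 / eps ^+ 2) / 2) *
    (n%:R ^+ 2 * eps ^+ 2) = 8 * n%:R ^+ 5 + 2 * (n%:R ^+ 3 * (eps / delta) ^+ 2).
  by field; apply/andP.
have : 0 <= n%:R ^+ 3 * (eps / delta) ^+ 2 :> R by rewrite mulr_ge0 ?sqr_ge0 ?exprn_ge0.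
lra.
Qed.

End HegselmannKrause.

Theorem theorem2 :
  exists C : nat, forall (R : realType) (d n : nat) (eps delta : R)
    (x0 : state R d n),
    0 < eps -> 0 < delta ->
    (@expected_conv_time R d n (@complete_graph n) eps delta x0 <=
       ((C%:R * n%:R ^+ 3 * (n%:R ^+ 2 + (eps / delta) ^+ 2) : R))%:E)%E.
Proof.
exists 8%N => R d n eps delta x0 eps_gt0 delta_gt0.
apply: lime_le.
  by apply: is_cvg_nneseries => k _ _; rewrite lee_fin tail_prob_ge0.
apply: nearW => K; rewrite sumEFin lee_fin big_mkord.
exact: sum_tail_prob_le_poly.
Qed.
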